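(* Consider the two-unicast wireline network (''butterfly network 1'') with nodes $\mathsf{S}_1,\mathsf{S}_2,\mathsf{M}_1,\mathsf{M}_2,\mathsf{D}_1,\mathsf{D}_2$ and seven directed edges: edge 1 from $\mathsf{S}_1$ to $\mathsf{M}_1$, edge 2 from $\mathsf{S}_2$ to $\mathsf{M}_1$, edge 3 from $\mathsf{M}_1$ to $\mathsf{M}_2$, edge 4 from $\mathsf{S}_1$ to $\mathsf{D}_2$, edge 5 from $\mathsf{S}_2$ to $\mathsf{D}_1$, edge 6 from $\mathsf{M}_2$ to $\mathsf{D}_2$, edge 7 from $\mathsf{M}_2$ to $\mathsf{D}_1$, with arbitrary capacities $\mathsf{C}_1,\dots,\mathsf{C}_7\ge 0$. Then secure communication is not possible: the only securely achievable rate pair is $(R_1,R_2)=(0,0)$.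
   Context: Network model: a directed acyclic graph; each edge $e$ is a noiseless orthogonal channel of capacity $\mathsf{C}_e$ carrying symbols over $\mathbb{F}_q$; over $n$ channel uses, edge $e$ carries $X_e^n$, received as $Y_e^n=X_e^n$. Source $\mathsf{S}_i$ has message $W_i$ (uniform, $q$-ary entropy $nR_i$, $W_1,W_2$ independent) to be decoded at $\mathsf{D}_i$, and an independent, unlimited private source of randomness $\Theta_i$. A rate pair is securely achievable if for some block length $n$ there are encoding functions—an edge leaving $\mathsf{S}_i$ carries a function of $(W_i,\Theta_i)$, any other edge a function of the symbols received on the incoming edges of its tail—and decoders at $\mathsf{D}_j$ (functions of the symbols on the incoming edges of $\mathsf{D}_j$) recovering $W_j$ with vanishing error probability, and moreover a passive eavesdropper wiretapping any single edge (which one is unknown) learns essentially nothing: for every edge $e$, $I(W_1,W_2;Z_e^n)<\epsilon_n$ with $\epsilon_n\to 0$, where $Z_e^n=X_e^n$ is the eavesdropper's observation on edge $e$ (strong secrecy). *)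

From HB Require Import structures.
From mathcomp Require Import all_boot all_order all_algebra.
From mathcomp Require Import all_classical all_reals all_analysis.
Set Implicit Arguments. Unset Strict Implicit. Unset Printing Implicit Defensive.
Import Order.TTheory GRing.Theory Num.Theory.
Import numFieldNormedType.Exports.
Local Open Scope classical_set_scope.
Local Open Scope ring_scope.

Section Info.
Variable R : realType.

Definition Prb (Om : finType) (P : Om -> R) (A : pred Om) : R :=
  \sum_(w | A w) P w.

Definition mutinf (Om : finType) (P : Om -> R) (A B : finType)
  (f : Om -> A) (g : Om -> B) : R :=
  \sum_(a : A) \sum_(b : B)
    let pab := Prb P (fun w => (f w == a) && (g w == b)) in
    if pab == 0 then 0
    else pab * ln (pab / (Prb P (fun w => f w == a) * Prb P (fun w => g w == b))).
End Info.

(* Butterfly network 1.  Edges: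
   1: S1->M1, 2: S2->M1, 3: M1->M2, 4: S1->D2, 5: S2->D1, 6: M2->D2, 7: M2->D1.
   [k e] = number of F-symbols carried by edge e over the block. *)
Record scheme (R : realType) (F : finFieldType) (k : nat -> nat) := Scheme {
  Wset1 : finType;
  Wset2 : finType;
  Th1 : finType;
  Th2 : finType;
  p1 : Th1 -> R;
  p2 : Th2 -> R;
  p1_ge0 : forall t, 0 <= p1 t;
  p1_sum : \sum_t p1 t = 1;
  p2_ge0 : forall t, 0 <= p2 t;
  p2_sum : \sum_t p2 t = 1;
  enc1 : Wset1 -> Th1 -> (k 1%N).-tuple F;
  enc4 : Wset1 -> Th1 -> (k 4%N).-tuple F;
  enc2 : Wset2 -> Th2 -> (k 2%N).-tuple F;
  enc5 : Wset2 -> Th2 -> (k 5%N).-tuple F;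
  enc3 : (k 1%N).-tuple F -> (k 2%N).-tuple F -> (k 3%N).-tuple F;
  enc6 : (k 3%N).-tuple F -> (k 6%N).-tuple F;
  enc7 : (k 3%N).-tuple F -> (k 7%N).-tuple F;
  dec1 : (k 5%N).-tuple F -> (k 7%N).-tuple F -> Wset1;
  dec2 : (k 4%N).-tuple F -> (k 6%N).-tuple F -> Wset2
}.

Section SchemeDefs.
Variables (R : realType) (F : finFieldType) (k : nat -> nat) (s : scheme R F k).

Definition Omega : finType := (Wset1 s * Wset2 s * Th1 s * Th2 s)%type.

Definition PO (w : Omega) : R :=
  (#|Wset1 s|%:R)^-1 * (#|Wset2 s|%:R)^-1 * p1 w.1.2 * p2 w.2.

Definition rvW1 (w : Omega) : Wset1 s := w.1.1.1.
Definition rvW2 (w : Omega) : Wset2 s := w.1.1.2.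
Definition rvW12 (w : Omega) : (Wset1 s * Wset2 s)%type := w.1.1.
Definition rvX1 (w : Omega) := enc1 (rvW1 w) w.1.2.
Definition rvX4 (w : Omega) := enc4 (rvW1 w) w.1.2.
Definition rvX2 (w : Omega) := enc2 (rvW2 w) w.2.
Definition rvX5 (w : Omega) := enc5 (rvW2 w) w.2.
Definition rvX3 (w : Omega) := @enc3 _ _ _ s (rvX1 w) (rvX2 w).
Definition rvX6 (w : Omega) := @enc6 _ _ _ s (rvX3 w).
Definition rvX7 (w : Omega) := @enc7 _ _ _ s (rvX3 w).

Definition Perr1 : R := Prb PO (fun w => @dec1 _ _ _ s (rvX5 w) (rvX7 w) != rvW1 w).
Definition Perr2 : R := Prb PO (fun w => @dec2 _ _ _ s (rvX4 w) (rvX6 w) != rvW2 w).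

Definition leak (e : nat) : R :=
  match e with
  | 1 => mutinf PO rvW12 rvX1
  | 2 => mutinf PO rvW12 rvX2
  | 3 => mutinf PO rvW12 rvX3
  | 4 => mutinf PO rvW12 rvX4
  | 5 => mutinf PO rvW12 rvX5
  | 6 => mutinf PO rvW12 rvX6
  | 7 => mutinf PO rvW12 rvX7
  | _ => 0
  end.
End SchemeDefs.

Definition edge_len (R : realType) (C : nat -> R) (n : nat) : nat -> nat :=
  fun e => Num.truncn (n%:R * C e).

(* (R1,R2) securely achievable: there are codes for an increasing sequence of
   block lengths n_j, with message entropies (q-ary) at least n_j R_i, decoding
   errors -> 0, and leakage on every single edge -> 0 (strong secrecy). *)
Definition sec_achievable (R : realType) (F : finFieldType) (C : nat -> R)
    (R1 R2 : R) : Prop :=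
  exists (nb : nat -> nat) (s : forall j, scheme R F (edge_len C (nb j))),
    (forall j, (nb j < nb j.+1)%N) /\
    (forall j, (0 < #|Wset1 (s j)|)%N /\ (0 < #|Wset2 (s j)|)%N) /\
    (forall j, (nb j)%:R * R1 * ln (#|F|%:R) <= ln (#|Wset1 (s j)|%:R)) /\
    (forall j, (nb j)%:R * R2 * ln (#|F|%:R) <= ln (#|Wset2 (s j)|%:R)) /\
    (fun j => Perr1 (s j)) @ \oo --> (0 : R) /\
    (fun j => Perr2 (s j)) @ \oo --> (0 : R) /\
    (forall e, (1 <= e <= 7)%N -> (fun j => leak (s j) e) @ \oo --> (0 : R)).

From HB Require Import structures.
From mathcomp Require Import all_boot all_order all_algebra.
From mathcomp Require Import all_classical all_reals all_analysis.
From mathcomp Require Import ring lra.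
Set Implicit Arguments.
Unset Strict Implicit.
Unset Printing Implicit Defensive.
Import Order.TTheory GRing.Theory Num.Theory.
Import numFieldNormedType.Exports.
Local Open Scope classical_set_scope.
Local Open Scope ring_scope.

(* Converse through the wiretapped edge 1.  D1 decodes W1 from (X5, X7), which
   are functions of X1 and of S2's message W2 and randomness Theta2.  Averaging
   the success of D1 over the independent Theta2 yields a soft guess of
   (W1, W2) from X1 alone that is right with probability 1 - Perr1, while
   against an independent copy of (W1, W2) it is right with probability only
   1/|W1|.  The variational bound p ln(p/q) >= p ln K + p - q K turns this gap
   into I(W1, W2; X1) >= (1 - Perr1) ln |W1| - 1.  Vanishing leakage and error
   thus keep ln |W1| bounded, whereas it grows like n R1 ln q: hence R1 = 0,
   and R2 = 0 in the same way through edge 2 and D2. *)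

Section Probability.
Variables (R : realType) (Om : finType) (P : Om -> R).

Lemma Prb_ge0 (A : pred Om) : (forall w, 0 <= P w) -> 0 <= Prb P A.
Proof. by move=> P0; apply: sumr_ge0. Qed.

Lemma Prb_le1 (A : pred Om) :
  (forall w, 0 <= P w) -> \sum_w P w = 1 -> Prb P A <= 1.
Proof.
move=> P0 P1; rewrite -P1 [leRHS](bigID A) /= lerDl.
exact: sumr_ge0.
Qed.

Lemma Prb_subset (A B : pred Om) :
  (forall w, 0 <= P w) -> (forall w, A w -> B w) -> Prb P A <= Prb P B.
Proof.
move=> P0 AB; rewrite /Prb [leRHS](bigID A) /=.
rewrite (eq_bigl A) ?lerDl ?sumr_ge0 // => w.
by case Aw: (A w); rewrite ?andbF ?andbT ?AB.
Qed.

Lemma Prb_indicator (A : pred Om) : Prb P A = \sum_w P w * (A w)%:R.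
Proof.
rewrite /Prb big_mkcond; apply: eq_bigr => w _.
by case: (A w); rewrite ?mulr1 ?mulr0.
Qed.

Lemma PrbC (A : pred Om) : Prb P (predC A) = \sum_w P w - Prb P A.
Proof. by rewrite /Prb [in RHS](bigID A) /= addrAC subrr add0r. Qed.

Lemma sum_Prb_fibers (B : finType) (g : Om -> B) (h : B -> R) :
  \sum_b Prb P (fun w => g w == b) * h b = \sum_w P w * h (g w).
Proof.
rewrite (partition_big g xpredT) //=; apply: eq_bigr => b _.
by rewrite /Prb big_distrl; apply: eq_bigr => w /eqP ->.
Qed.

Lemma sum_Prb_joint_fibers (A B : finType) (f : Om -> A) (g : Om -> B)
    (h : A -> B -> R) :
  \sum_a \sum_b Prb P (fun w => (f w == a) && (g w == b)) * h a b
  = \sum_w P w * h (f w) (g w).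
Proof.
rewrite pair_bigA /= -(sum_Prb_fibers (fun w => (f w, g w)) (fun ab => h ab.1 ab.2)).
by apply: eq_bigr => -[a b] _; congr (_ * _); apply: eq_bigl => w; rewrite xpair_eqE.
Qed.

Lemma sum_Prb_fibers1 (B : finType) (g : Om -> B) :
  \sum_b Prb P (fun w => g w == b) = \sum_w P w.
Proof.
under eq_bigr do rewrite -[Prb _ _]mulr1.
by rewrite (sum_Prb_fibers g (fun=> 1)); under eq_bigr do rewrite mulr1.
Qed.

End Probability.

Section ProductSums.
Variable R : realType.

Lemma sum_pair (X Y : finType) (G : X * Y -> R) :
  \sum_w G w = \sum_x \sum_y G (x, y).
Proof. by rewrite pair_bigA; apply: eq_bigr => -[]. Qed.

Lemma sum_weights_average (T U : finType) (p : T -> R) (r : U -> R)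
    (E : T -> U -> bool) : \sum_u r u = 1 ->
  \sum_t \sum_u p t * r u * Prb r (E t) = \sum_t \sum_u p t * r u * (E t u)%:R.
Proof.
move=> r1; apply: eq_bigr => t _.
rewrite -mulr_suml -mulr_sumr r1 mulr1 Prb_indicator mulr_sumr.
by under eq_bigr do rewrite mulrA.
Qed.

End ProductSums.

Section MutualInformation.
Variable R : realType.

Lemma ln_le_subr1 (x : R) : 0 < x -> ln x <= x - 1.
Proof. by move=> x0; have := expR_ge1Dx (ln x); rewrite lnK ?posrE //; lra. Qed.

Lemma mulr_ln_ratio_ge (p q K : R) : 0 < p -> 0 < q -> 0 < K ->
  p * ln K + p - q * K <= p * ln (p / q).
Proof.
move=> p0 q0 K0.
have pqK : p * (q * K / p) = q * K by rewrite mulrCA divff ?gt_eqF // mulr1.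
have := ler_wpM2l (ltW p0) (ln_le_subr1 (divr_gt0 (mulr_gt0 q0 K0) p0)).
by rewrite !ln_div ?lnM ?posrE ?mulr_gt0 //; nra.
Qed.

(* Convex combination of the previous bound for [K] and for [K = 1]; the
   trailing [p - q] sums to zero over a joint law and its product of marginals. *)
Lemma xlnx_ratio_ge (p q K a : R) : 0 <= p -> 0 <= q -> (0 < p -> 0 < q) ->
  0 < K -> 0 <= a <= 1 ->
  a * p * ln K - a * q * K + p - q <= (if p == 0 then 0 else p * ln (p / q)).
Proof.
move=> p0 q0 pq K0 /andP[a0 a1].
have aqK0 : 0 <= a * q * K by rewrite !mulr_ge0 // ltW.
case: eqP => [->|/eqP pn0]; first lra.
have p_gt0 : 0 < p by rewrite lt0r pn0.
have bound_K := mulr_ln_ratio_ge p_gt0 (pq p_gt0) K0.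
have bound_1 := mulr_ln_ratio_ge p_gt0 (pq p_gt0) ltr01.
rewrite ln1 mulr0 mulr1 add0r in bound_1.
have a1' : 0 <= 1 - a by rewrite subr_ge0.
have := ler_wpM2l a0 bound_K; have := ler_wpM2l a1' bound_1.
have := mulr_ge0 a0 q0; nra.
Qed.

Lemma mutinf_ge_guess (Om A B : finType) (P : Om -> R) (f : Om -> A) (g : Om -> B)
    (al : A -> B -> R) (delta M : R) :
    (forall w, 0 <= P w) -> \sum_w P w = 1 ->
    (forall a b, 0 <= al a b <= 1) ->
    (forall b, \sum_a al a b * Prb P (fun w => f w == a) <= delta) -> 0 < M ->
  (\sum_w P w * al (f w) (g w)) * ln M - delta * M <= mutinf P f g.
Proof.
move=> P0 P1 al01 hdelta M0.
pose pa a := Prb P (fun w => f w == a).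
pose pb b := Prb P (fun w => g w == b).
pose pab a b := Prb P (fun w => (f w == a) && (g w == b)).
have sum_pa : \sum_a pa a = 1 by rewrite sum_Prb_fibers1.
have sum_pb : \sum_b pb b = 1 by rewrite sum_Prb_fibers1.
have sum_pab : \sum_a \sum_b pab a b = 1.
  under eq_bigr do under eq_bigr do rewrite -[pab _ _]mulr1.
  by rewrite (sum_Prb_joint_fibers P f g (fun _ _ => 1)); under eq_bigr do rewrite mulr1.
have sum_papb : \sum_a \sum_b pa a * pb b = 1.
  by under eq_bigr do rewrite -mulr_sumr sum_pb mulr1.
have guess_joint : \sum_a \sum_b al a b * pab a b * ln M
    = (\sum_w P w * al (f w) (g w)) * ln M.
  rewrite -sum_Prb_joint_fibers mulr_suml; apply: eq_bigr => a _.
  by rewrite mulr_suml; apply: eq_bigr => b _; rewrite /pab; ring.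
have guess_indep : \sum_a \sum_b al a b * (pa a * pb b) * M <= delta * M.
  rewrite exchange_big -[leRHS]mul1r -sum_pb mulr_suml /=.
  apply: ler_sum => b _.
  have -> : \sum_a al a b * (pa a * pb b) * M = (\sum_a al a b * pa a) * (pb b * M).
    by rewrite mulr_suml; apply: eq_bigr => a _; ring.
  by rewrite [leRHS]mulrCA ler_wpM2r ?mulr_ge0 ?Prb_ge0 ?(ltW M0).
have pointwise : \sum_a \sum_b (al a b * pab a b * ln M - al a b * (pa a * pb b) * M
    + pab a b - pa a * pb b) <= mutinf P f g.
  apply: ler_sum => a _; apply: ler_sum => b _.
  apply: xlnx_ratio_ge => //.
  - exact: Prb_ge0.
  - by rewrite mulr_ge0 ?Prb_ge0.
  - move=> pab_gt0; apply: mulr_gt0; apply: lt_le_trans pab_gt0 _;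
      by apply: Prb_subset => // w /andP[].
move: pointwise; under eq_bigr do rewrite sumrB big_split sumrB /=.
rewrite sumrB big_split sumrB /= guess_joint sum_pab sum_papb.
by move: guess_indep; lra.
Qed.

Lemma mutinf_cst_l (Om A B : finType) (P : Om -> R) (f : Om -> A) (g : Om -> B) (a0 : A) :
  (forall w, f w = a0) -> \sum_w P w = 1 -> mutinf P f g = 0.
Proof.
move=> fE P1; apply: big1 => a _; apply: big1 => b _ /=.
have [->|a_neq] := eqVneq a a0; last first.
  by rewrite /Prb big_pred0 ?eqxx // => w; rewrite fE eq_sym (negbTE a_neq).
have -> : Prb P (fun w => f w == a0) = 1.
  by rewrite -P1; apply: eq_bigl => w; rewrite fE eqxx.
have -> : Prb P (fun w => (f w == a0) && (g w == b)) = Prb P (fun w => g w == b).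
  by apply: eq_bigl => w; rewrite fE eqxx.
by case: eqP => // /eqP pb_neq; rewrite mul1r divff // ln1 mulr0.
Qed.

End MutualInformation.

Section Asymptotics.
Variable R : realType.

Lemma fano_eventually_bounded (L lk pe : nat -> R) :
    (forall j, (1 - pe j) * L j - 1 <= lk j) ->
    lk @ \oo --> (0 : R) -> pe @ \oo --> (0 : R) ->
  \forall j \near \oo, L j <= 4.
Proof.
move=> hfano lk0 pe0.
have half_gt0 : (0 : R) < 2^-1 by rewrite invr_gt0.
near=> j.
have lkj : lk j <= 1 by near: j; exact: cvgr_le lk0 _ ltr01.
have pej : pe j <= 2^-1 by near: j; exact: cvgr_le pe0 _ half_gt0.
have := hfano j; case: (leP 0 (L j)) => [L0|]; last lra.
have : 0 <= (2^-1 - pe j) * L j by rewrite mulr_ge0 ?subr_ge0.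
have : 2^-1 * 2 = 1 :> R by rewrite mulVf.
nra.
Unshelve. all: by end_near.
Qed.

Lemma eq0_of_bounded_multiples (nb : nat -> nat) (x B : R) (L : nat -> R) :
    (forall j, (nb j < nb j.+1)%N) -> 0 <= x ->
    (forall j, (nb j)%:R * x <= L j) -> (\forall j \near \oo, L j <= B) ->
  x = 0.
Proof.
move=> nb_incr x0 hL [N _ hB].
have nb_ge j : (j <= nb j)%N.
  by elim: j => // j ih; apply: leq_ltn_trans ih (nb_incr j).
apply/eqP; rewrite eq_le x0 andbT leNgt; apply/negP => x_gt0.
pose j := maxn N (Num.truncn (B / x)).+1.
have Bx_lt : B / x < (nb j)%:R.
  apply: lt_le_trans (truncnS_gt _) _.
  by rewrite ler_nat (leq_trans _ (nb_ge j)) // leq_maxr.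
have := le_trans (hL j) (hB j (leq_maxl _ _)).
by rewrite -ler_pdivlMr // leNgt Bx_lt.
Qed.

Lemma fano_rate_eq0 (nb : nat -> nat) (r c : R) (L lk pe : nat -> R) :
    (forall j, (nb j < nb j.+1)%N) -> 0 <= r -> 0 < c ->
    (forall j, (nb j)%:R * r * c <= L j) ->
    (forall j, (1 - pe j) * L j - 1 <= lk j) ->
    lk @ \oo --> (0 : R) -> pe @ \oo --> (0 : R) ->
  r = 0.
Proof.
move=> nb_incr r0 c_gt0 hL hfano lk0 pe0.
have hL' j : (nb j)%:R * (r * c) <= L j by rewrite mulrA.
have := eq0_of_bounded_multiples nb_incr (mulr_ge0 r0 (ltW c_gt0)) hL'
  (fano_eventually_bounded hfano lk0 pe0).
by move/eqP; rewrite mulf_eq0 (gt_eqF c_gt0) orbF => /eqP.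
Qed.

End Asymptotics.

Section ButterflyScheme.
Variables (R : realType) (F : finFieldType) (k : nat -> nat) (s : scheme R F k).
Hypotheses (W1_gt0 : (0 < #|Wset1 s|)%N) (W2_gt0 : (0 < #|Wset2 s|)%N).

Let unif_W12 : R := (#|Wset1 s| * #|Wset2 s|)%:R^-1.

Lemma sum_PO (G : Omega s -> R) :
  \sum_w PO w * G w =
  unif_W12 * \sum_m \sum_t1 \sum_t2 p1 t1 * p2 t2 * G (m, t1, t2).
Proof.
rewrite [in RHS]pair_bigA [in RHS]pair_bigA big_distrr.
by apply: eq_bigr => -[[m t1] t2] _; rewrite /PO /unif_W12 natrM invfM /=; ring.
Qed.

Lemma sum_weights : \sum_(t1 : Th1 s) \sum_(t2 : Th2 s) p1 t1 * p2 t2 = 1.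
Proof.
by under eq_bigr do rewrite -mulr_sumr p2_sum mulr1; rewrite p1_sum.
Qed.

Lemma PO_ge0 (w : Omega s) : 0 <= PO w.
Proof. by rewrite /PO !mulr_ge0 ?invr_ge0 ?p1_ge0 ?p2_ge0. Qed.

Lemma PO_sum1 : \sum_(w : Omega s) PO w = 1.
Proof.
rewrite -(eq_bigr _ (fun w _ => mulr1 (PO w))) sum_PO.
under eq_bigr do under eq_bigr do under eq_bigr do rewrite mulr1.
rewrite sum_weights sumr_const card_prod /unif_W12.
by rewrite mulVf // pnatr_eq0 -lt0n muln_gt0 W1_gt0.
Qed.

Lemma Prb_rvW12 (m : Wset1 s * Wset2 s) :
  Prb (PO (s:=s)) (fun w => rvW12 w == m) = unif_W12.
Proof.
rewrite Prb_indicator sum_PO (bigD1 m) //= [X in _ + X]big1 => [|m' /negbTE m'm].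
  under eq_bigr do under eq_bigr do rewrite /rvW12 /= eqxx mulr1.
  by rewrite sum_weights addr0 mulr1.
by apply: big1 => t1 _; apply: big1 => t2 _; rewrite /rvW12 /= m'm mulr0.
Qed.

Definition dec1_from_edge1 (w2 : Wset2 s) (x1 : (k 1%N).-tuple F) (t2 : Th2 s) :=
  dec1 s (enc5 w2 t2) (enc7 s (enc3 s x1 (enc2 w2 t2))).

Definition dec2_from_edge2 (w1 : Wset1 s) (x2 : (k 2%N).-tuple F) (t1 : Th1 s) :=
  dec2 s (enc4 w1 t1) (enc6 s (enc3 s (enc1 w1 t1) x2)).

Definition guess1 (m : Wset1 s * Wset2 s) (x1 : (k 1%N).-tuple F) : R :=
  Prb (p2 (s:=s)) (fun t2 => dec1_from_edge1 m.2 x1 t2 == m.1).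

Definition guess2 (m : Wset1 s * Wset2 s) (x2 : (k 2%N).-tuple F) : R :=
  Prb (p1 (s:=s)) (fun t1 => dec2_from_edge2 m.1 x2 t1 == m.2).

Lemma guess1_in01 m x1 : 0 <= guess1 m x1 <= 1.
Proof. by rewrite Prb_ge0 ?Prb_le1 ?p2_sum //; exact: p2_ge0. Qed.

Lemma guess2_in01 m x2 : 0 <= guess2 m x2 <= 1.
Proof. by rewrite Prb_ge0 ?Prb_le1 ?p1_sum //; exact: p1_ge0. Qed.

Lemma sum_guess1 x1 : \sum_m guess1 m x1 = #|Wset2 s|%:R.
Proof.
rewrite sum_pair exchange_big.
by under eq_bigr do rewrite /guess1 /= sum_Prb_fibers1 p2_sum; rewrite sumr_const.
Qed.

Lemma sum_guess2 x2 : \sum_m guess2 m x2 = #|Wset1 s|%:R.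
Proof.
rewrite sum_pair.
by under eq_bigr do rewrite /guess2 /= sum_Prb_fibers1 p1_sum; rewrite sumr_const.
Qed.

Lemma guess1_success :
  \sum_w PO w * guess1 (rvW12 w) (rvX1 w) = 1 - Perr1 s.
Proof.
have -> : Perr1 s = Prb (PO (s:=s)) (predC (fun w => dec1 s (rvX5 w) (rvX7 w) == rvW1 w)).
  by [].
rewrite PrbC PO_sum1 // subKr Prb_indicator !sum_PO; congr (_ * _).
apply: eq_bigr => m _.
exact: (sum_weights_average (p1 (s:=s))
  (fun t1 t2 => dec1_from_edge1 m.2 (enc1 m.1 t1) t2 == m.1) (p2_sum s)).
Qed.

Lemma guess2_success :
  \sum_w PO w * guess2 (rvW12 w) (rvX2 w) = 1 - Perr2 s.
Proof.
have -> : Perr2 s = Prb (PO (s:=s)) (predC (fun w => dec2 s (rvX4 w) (rvX6 w) == rvW2 w)).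
  by [].
rewrite PrbC PO_sum1 // subKr Prb_indicator !sum_PO; congr (_ * _).
apply: eq_bigr => m _; rewrite exchange_big [RHS]exchange_big /=.
under eq_bigr do under eq_bigr do rewrite [p1 _ * _]mulrC.
under [RHS]eq_bigr do under eq_bigr do rewrite [p1 _ * _]mulrC.
exact: (sum_weights_average (p2 (s:=s))
  (fun t2 t1 => dec2_from_edge2 m.1 (enc2 m.2 t2) t1 == m.2) (p1_sum s)).
Qed.

Lemma leak1_ge : (1 - Perr1 s) * ln #|Wset1 s|%:R - 1 <= leak s 1.
Proof.
have W1_neq0 : #|Wset1 s|%:R != 0 :> R by rewrite pnatr_eq0 -lt0n.
rewrite -guess1_success -[X in _ - X](mulVf W1_neq0).
apply: mutinf_ge_guess; rewrite ?ltr0n //.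
- exact: PO_ge0.
- exact: PO_sum1.
- exact: guess1_in01.
move=> x1; under eq_bigr do rewrite Prb_rvW12 //.
rewrite -mulr_suml sum_guess1 /unif_W12 natrM invfM mulrCA.
by rewrite mulfV ?mulr1 // pnatr_eq0 -lt0n.
Qed.

Lemma leak2_ge : (1 - Perr2 s) * ln #|Wset2 s|%:R - 1 <= leak s 2.
Proof.
have W2_neq0 : #|Wset2 s|%:R != 0 :> R by rewrite pnatr_eq0 -lt0n.
rewrite -guess2_success -[X in _ - X](mulVf W2_neq0).
apply: mutinf_ge_guess; rewrite ?ltr0n //.
- exact: PO_ge0.
- exact: PO_sum1.
- exact: guess2_in01.
move=> x2; under eq_bigr do rewrite Prb_rvW12 //.
rewrite -mulr_suml sum_guess2 /unif_W12 natrM invfM mulrA.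
by rewrite mulfV ?mul1r // pnatr_eq0 -lt0n.
Qed.

End ButterflyScheme.

Section TrivialScheme.
Variables (R : realType) (F : finFieldType) (k : nat -> nat).

Lemma sum_unit_one : \sum_(t : unit) (1 : R) = 1.
Proof. by rewrite sumr_const card_unit. Qed.

Definition trivial_scheme : scheme R F k :=
  @Scheme R F k unit unit unit unit (fun=> 1) (fun=> 1)
    (fun=> ler01) sum_unit_one (fun=> ler01) sum_unit_one
    (fun _ _ => nseq_tuple _ 0) (fun _ _ => nseq_tuple _ 0)
    (fun _ _ => nseq_tuple _ 0) (fun _ _ => nseq_tuple _ 0)
    (fun _ _ => nseq_tuple _ 0) (fun=> nseq_tuple _ 0) (fun=> nseq_tuple _ 0)
    (fun _ _ => tt) (fun _ _ => tt).

Lemma trivial_leak e : leak trivial_scheme e = 0.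
Proof.
have W12_cst (w : Omega trivial_scheme) : rvW12 w = (tt, tt).
  by case: w => [[[[] []] t1] t2].
have P1 : \sum_(w : Omega trivial_scheme) PO w = 1 by rewrite PO_sum1 ?card_unit.
by do 8?[case: e => [|e]] => //=; exact: mutinf_cst_l W12_cst P1.
Qed.

Lemma trivial_Perr1 : Perr1 trivial_scheme = 0.
Proof. by rewrite /Perr1 /Prb big_pred0 // => -[[[[] []] _] _]. Qed.

Lemma trivial_Perr2 : Perr2 trivial_scheme = 0.
Proof. by rewrite /Perr2 /Prb big_pred0 // => -[[[[] []] _] _]. Qed.

End TrivialScheme.

Lemma sec_achievable00 (R : realType) (F : finFieldType) (C : nat -> R) :
  sec_achievable F C 0 0.
Proof.
have cvg0 (u : nat -> R) : (forall j, u j = 0) -> u @ \oo --> 0.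
  by move=> u0; apply: cvg_near_cst; apply: nearW.
exists id, (fun n => trivial_scheme R F (edge_len C n)).
split=> //; split=> [j|]; first by rewrite card_unit.
split=> [j|]; first by rewrite mulr0 mul0r card_unit ln1.
split=> [j|]; first by rewrite mulr0 mul0r card_unit ln1.
split; first exact: cvg0 (fun=> trivial_Perr1 _ _ _).
split; first exact: cvg0 (fun=> trivial_Perr2 _ _ _).
by move=> e _; apply: cvg0 => j; exact: trivial_leak.
Qed.

Theorem theorem2 (R : realType) (F : finFieldType) (C : nat -> R)
    (hC : forall e, (1 <= e <= 7)%N -> 0 <= C e)
    (R1 R2 : R) (hR1 : 0 <= R1) (hR2 : 0 <= R2) :
  sec_achievable F C R1 R2 <-> (R1 = 0 /\ R2 = 0).
Proof.
split=> [|[-> ->]]; last exact: sec_achievable00.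
case=> nb [s [nb_incr [card_gt0 [rate1 [rate2 [Perr1_0 [Perr2_0 leak0]]]]]]].
have lnF_gt0 : 0 < ln (#|F|%:R : R) by rewrite ln_gt0 // ltr1n card_finNzRing_gt1.
split.
  apply: fano_rate_eq0 nb_incr hR1 lnF_gt0 rate1 _ (leak0 1%N isT) Perr1_0.
  by move=> j; case: (card_gt0 j) => ? ?; exact: leak1_ge.
apply: fano_rate_eq0 nb_incr hR2 lnF_gt0 rate2 _ (leak0 2%N isT) Perr2_0.
by move=> j; case: (card_gt0 j) => ? ?; exact: leak2_ge.
Qed.
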